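(* Let $L$ be a $c$-lattice and $S$ a multiplicatively closed subset of $L$ (with $1\in S$, $0\notin S$), and let $p\in L$. If $q_1,\dots,q_n$ are $S$-$p$-primary elements of $L$, then $\bigwedge_{i=1}^n q_i$ is an $S$-$p$-primary element of $L$.
   Context: A multiplicative lattice is a complete lattice with a commutative, associative multiplication distributing over arbitrary joins, with $1$ as identity; $L_*$ is the set of compact elements. A $c$-lattice is a compactly generated multiplicative lattice with $1$ compact in which the product of two compact elements is compact. A multiplicatively closed subset is a nonempty $S\subseteq L_*$ closed under multiplication. $\sqrt a=\bigvee\{x\in L_*\mid x^n\le a\text{ for some }n\in\mathbb{Z}^+\}$. A proper element $p$ with $t\not\le p$ for all $t\in S$ is $S$-prime if there is $s\in S$ such that $ab\le p$ implies $sa\le p$ or $sb\le p$ for all $a,b$. A proper element $q$ with $t\not\le q$ for all $t\in S$ is $S$-primary if there is $s\in S$ such that $cd\le q$ implies $sc\le q$ or $sd\le\sqrt q$ for all $c,d\in L$; it is $S$-$p$-primary if moreover $\sqrt q=p$ and $p$ is $S$-prime. *)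

From Stdlib Require Import List Arith.

Record MultLattice := {
  carrier :> Type;
  le : carrier -> carrier -> Prop;
  sup : (carrier -> Prop) -> carrier;
  mul : carrier -> carrier -> carrier;
  one : carrier;
  le_refl : forall x, le x x;
  le_trans : forall x y z, le x y -> le y z -> le x z;
  le_antisym : forall x y, le x y -> le y x -> x = y;
  sup_ub : forall (A : carrier -> Prop) x, A x -> le x (sup A);
  sup_least : forall (A : carrier -> Prop) z,
      (forall x, A x -> le x z) -> le (sup A) z;
  mul_comm : forall x y, mul x y = mul y x;
  mul_assoc : forall x y z, mul x (mul y z) = mul (mul x y) z;
  mul_one : forall x, mul one x = x;
  le_one : forall x, le x one;
  mul_sup : forall (a : carrier) (A : carrier -> Prop),
      mul a (sup A) = sup (fun y => exists x, A x /\ y = mul a x)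
}.

Arguments le {_}. Arguments sup {_}. Arguments mul {_}. Arguments one {_}.

Section Defs.
Variable L : MultLattice.

Definition bot : L := sup (fun _ => False).

Definition inf (A : L -> Prop) : L := sup (fun x => forall y, A y -> le x y).

Definition compact (x : L) : Prop :=
  forall A : L -> Prop, le x (sup A) ->
    exists l : list L, (forall y, In y l -> A y) /\ le x (sup (fun y => In y l)).

Definition compactly_generated : Prop :=
  forall a : L, a = sup (fun x => compact x /\ le x a).

Definition c_lattice : Prop :=
  compactly_generated /\ compact one /\
  (forall x y, compact x -> compact y -> compact (mul x y)).

Definition mult_closed (S : L -> Prop) : Prop :=
  (exists s, S s) /\ (forall s, S s -> compact s) /\
  (forall s t, S s -> S t -> S (mul s t)).

Fixpoint pw (x : L) (n : nat) : L :=
  match n with 0 => one | S m => mul x (pw x m) end.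

Definition rad (a : L) : L :=
  sup (fun x => compact x /\ exists n, 1 <= n /\ le (pw x n) a).

Definition proper (a : L) : Prop := a <> one.

Definition S_prime (S : L -> Prop) (p : L) : Prop :=
  proper p /\ (forall t, S t -> ~ le t p) /\
  exists s, S s /\ forall a b, le (mul a b) p -> le (mul s a) p \/ le (mul s b) p.

Definition S_primary (S : L -> Prop) (q : L) : Prop :=
  proper q /\ (forall t, S t -> ~ le t q) /\
  exists s, S s /\ forall c d, le (mul c d) q -> le (mul s c) q \/ le (mul s d) (rad q).

Definition S_p_primary (S : L -> Prop) (p q : L) : Prop :=
  S_primary S q /\ rad q = p /\ S_prime S p.

End Defs.

Arguments bot {_}. Arguments inf {_}. Arguments compact {_}.
Arguments mult_closed {_}. Arguments rad {_}.
Arguments S_prime {_}. Arguments S_primary {_}. Arguments S_p_primary {_}.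

(* Each q_i lies below q_1, so the meet Q inherits properness and S-avoidance, and
   rad Q <= rad q_1 = p.  Conversely, in a c-lattice a compact x below rad q has a power
   below q (a finite join of elements with powers below q has one too, by the binomial
   expansion), so a compact x <= p has a power below every q_i, hence below Q.  Finally,
   the product of the witnesses s_i of the q_i is a single witness s for all of them: if
   cd <= Q and sd is not below p, then sc <= q_i for each i, i.e. sc <= Q. *)

From Stdlib Require Import Arith Lia Classical List.

#[local] Arguments le_refl {_}. #[local] Arguments le_trans {_}.
#[local] Arguments le_antisym {_}. #[local] Arguments sup_ub {_}.
#[local] Arguments sup_least {_}. #[local] Arguments mul_comm {_}.
#[local] Arguments mul_assoc {_}. #[local] Arguments mul_one {_}.
#[local] Arguments le_one {_}. #[local] Arguments mul_sup {_}.
#[local] Arguments pw {_}.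

Lemma exists_uniform_witness {A : Type} (G : A -> Prop) (f : A -> A -> A)
    (R : nat -> A -> Prop) (a0 : A) (n : nat) :
  G a0 -> (forall a b, G a -> G b -> G (f a b)) ->
  (forall i a b, R i a -> R i (f a b)) -> (forall i a b, R i b -> R i (f a b)) ->
  (forall i, 1 <= i <= n -> exists a, G a /\ R i a) ->
  exists a, G a /\ forall i, 1 <= i <= n -> R i a.
Proof.
  intros G0 Gf Rl Rr HR. induction n as [|n IH].
  - exists a0. split; [exact G0 | lia].
  - destruct IH as [a [Ga Ha]]; [intros i Hi; apply HR; lia |].
    destruct (HR (S n)) as [b [Gb Hb]]; [lia |].
    exists (f a b). split; [now apply Gf |].
    intros i Hi. destruct (Nat.eq_dec i (S n)) as [-> | Hne].
    + now apply Rr.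
    + apply Rl, Ha. lia.
Qed.

Section MultLatticeFacts.
Variable L : MultLattice.

Lemma mul_one_r (x : L) : mul x one = x.
Proof. rewrite mul_comm; apply mul_one. Qed.

Lemma mul_AC (c x y : L) : mul (mul c x) y = mul (mul c y) x.
Proof. now rewrite <- !mul_assoc, (mul_comm x). Qed.

Definition join (u v : L) : L := sup (fun z => z = u \/ z = v).

Lemma le_join_l (u v : L) : le u (join u v).
Proof. apply sup_ub; now left. Qed.

Lemma le_join_r (u v : L) : le v (join u v).
Proof. apply sup_ub; now right. Qed.

Lemma join_le (u v a : L) : le u a -> le v a -> le (join u v) a.
Proof. intros Hu Hv; apply sup_least; now intros x [-> | ->]. Qed.

Lemma mul_join_le (c u v a : L) :
  le (mul c u) a -> le (mul c v) a -> le (mul c (join u v)) a.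
Proof.
  intros Hu Hv. unfold join; rewrite mul_sup; apply sup_least.
  now intros y [x [[-> | ->] ->]].
Qed.

Lemma mul_mono_r (c a b : L) : le a b -> le (mul c a) (mul c b).
Proof.
  intros Hab. assert (Eb : b = join a b).
  { apply le_antisym; [apply le_join_r | apply join_le; [exact Hab | apply le_refl]]. }
  rewrite Eb; unfold join; rewrite mul_sup.
  apply sup_ub. exists a; split; [now left | reflexivity].
Qed.

Lemma mul_mono_l (c a b : L) : le a b -> le (mul a c) (mul b c).
Proof. intros Hab; rewrite (mul_comm a), (mul_comm b); now apply mul_mono_r. Qed.

Lemma mul_le_l (c x : L) : le (mul c x) c.
Proof. rewrite <- (mul_one_r c) at 2; apply mul_mono_r, le_one. Qed.

Lemma mul_le_r (c x : L) : le (mul x c) c.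
Proof. rewrite mul_comm; apply mul_le_l. Qed.

Lemma le_mul_of_le (c x a : L) : le c a -> le (mul c x) a.
Proof. intros Hc; eapply le_trans; [apply mul_le_l | exact Hc]. Qed.

Lemma pw_add (x : L) (m k : nat) : pw x (m + k) = mul (pw x m) (pw x k).
Proof.
  induction m as [|m IH]; simpl.
  - now rewrite mul_one.
  - now rewrite IH, mul_assoc.
Qed.

Lemma pw_mono (x y : L) (n : nat) : le x y -> le (pw x n) (pw y n).
Proof.
  intros Hxy; induction n as [|n IH]; simpl; [apply le_refl |].
  eapply le_trans; [apply mul_mono_l, Hxy | apply mul_mono_r, IH].
Qed.

(* Every word of length m + k in u and v contains u at least m times or v at least
   k times; the multiplier c makes the induction go through. *)
Lemma mul_pw_join_le (a u v : L) (N : nat) : forall m k c, m + k = N ->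
  le (mul c (pw u m)) a -> le (mul c (pw v k)) a -> le (mul c (pw (join u v) N)) a.
Proof.
  induction N as [|N IH]; intros [|m] [|k] c E Hu Hv; simpl in *;
    try (rewrite mul_one_r in Hu || rewrite mul_one_r in Hv; now apply le_mul_of_le);
    try lia.
  rewrite mul_assoc, mul_AC. apply mul_join_le; rewrite mul_AC.
  - apply (IH m (S k)); [lia | now rewrite <- mul_assoc |].
    rewrite mul_AC; now apply le_mul_of_le.
  - apply (IH (S m) k); [lia | | now rewrite <- mul_assoc].
    rewrite mul_AC; now apply le_mul_of_le.
Qed.

Lemma pw_join_le (q u v : L) (m k : nat) :
  le (pw u m) q -> le (pw v k) q -> le (pw (join u v) (m + k)) q.
Proof.
  intros Hu Hv. rewrite <- (mul_one (pw _ _)).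
  apply (mul_pw_join_le q u v (m + k) m k); [reflexivity | now rewrite mul_one ..].
Qed.

Lemma pw_sup_list_le (q : L) (l : list L) :
  (forall y, In y l -> exists n, le (pw y n) q) ->
  exists m, le (pw (sup (fun y => In y l)) m) q.
Proof.
  induction l as [|a l IH]; intros Hl.
  - exists 1. simpl. rewrite mul_one_r. now apply sup_least.
  - destruct (Hl a) as [n Hn]; [now left |].
    destruct IH as [m Hm]; [intros y Hy; apply Hl; now right |].
    exists (n + m).
    apply (le_trans _ (pw (join a (sup (fun y => In y l))) (n + m)));
      [apply pw_mono | now apply pw_join_le].
    apply sup_least. intros x [<- | Hx]; [apply le_join_l |].
    eapply le_trans; [now apply (sup_ub (fun y => In y l)) | apply le_join_r].
Qed.

Lemma compact_le_rad (q x : L) :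
  compact x -> le x (rad q) -> exists m, 1 <= m /\ le (pw x m) q.
Proof.
  intros Hc Hx. destruct (Hc _ Hx) as [l [Hl Hle]].
  destruct (pw_sup_list_le q l) as [m Hm].
  { intros y Hy. destruct (Hl y Hy) as [_ [n [_ Hn]]]. now exists n. }
  exists (S m). split; [lia |]. simpl.
  eapply le_trans; [apply mul_le_r | eapply le_trans; [apply pw_mono, Hle | exact Hm]].
Qed.

Lemma rad_mono (a b : L) : le a b -> le (rad a) (rad b).
Proof.
  intros Hab. apply sup_least. intros x [Hc [n [Hn Hx]]].
  apply sup_ub. split; [exact Hc |]. exists n. split; [exact Hn | eapply le_trans; eauto].
Qed.

Lemma inf_lb (A : L -> Prop) (y : L) : A y -> le (inf A) y.
Proof. intros Hy; apply sup_least; intros x Hx; now apply Hx. Qed.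

Lemma inf_glb (A : L -> Prop) (x : L) : (forall y, A y -> le x y) -> le x (inf A).
Proof. intros H; now apply sup_ub. Qed.

Definition inf_range (q : nat -> L) (n : nat) : L :=
  inf (fun y => exists i, 1 <= i <= n /\ y = q i).

Lemma inf_range_lb (q : nat -> L) (n i : nat) : 1 <= i <= n -> le (inf_range q n) (q i).
Proof. intros Hi; apply inf_lb; now exists i. Qed.

Lemma inf_range_glb (q : nat -> L) (n : nat) (x : L) :
  (forall i, 1 <= i <= n -> le x (q i)) -> le x (inf_range q n).
Proof. intros H; apply inf_glb; intros y [i [Hi ->]]; now apply H. Qed.

Lemma rad_inf_range (p : L) (q : nat -> L) (n : nat) :
  compactly_generated L -> 1 <= n -> (forall i, 1 <= i <= n -> rad (q i) = p) ->
  rad (inf_range q n) = p.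
Proof.
  intros Hcg Hn Hq. apply le_antisym.
  - rewrite <- (Hq 1) by lia. apply rad_mono, inf_range_lb; lia.
  - rewrite (Hcg p). apply sup_least. intros x [Hc Hxp].
    destruct (exists_uniform_witness (fun m => 1 <= m) Nat.add
                (fun i m => le (pw x m) (q i)) 1 n) as [M [HM HMq]].
    + lia.
    + intros; lia.
    + intros i m k H. rewrite pw_add. eapply le_trans; [apply mul_le_l | exact H].
    + intros i m k H. rewrite pw_add. eapply le_trans; [apply mul_le_r | exact H].
    + intros i Hi. apply compact_le_rad; [exact Hc | now rewrite Hq].
    + apply sup_ub. split; [exact Hc |]. exists M. split; [exact HM |].
      now apply inf_range_glb.
Qed.

Lemma S_primary_inf_range (S : L -> Prop) (p : L) (q : nat -> L) (n : nat) :
  mult_closed S -> S one -> 1 <= n -> rad (inf_range q n) = p ->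
  (forall i, 1 <= i <= n -> S_primary S (q i) /\ rad (q i) = p) ->
  S_primary S (inf_range q n).
Proof.
  intros [_ [_ HSmul]] HS1 Hn Hrad Hq.
  assert (Hlb1 : le (inf_range q n) (q 1)) by (apply inf_range_lb; lia).
  destruct (Hq 1) as [[Hproper [Havoid _]] _]; [lia |].
  split; [| split].
  - intros E. apply Hproper, le_antisym; [apply le_one | now rewrite <- E].
  - intros t Ht Hle. apply (Havoid t Ht). now apply (le_trans _ _ _ Hle).
  - destruct (exists_uniform_witness S mul (fun i s => forall c d,
        le (mul c d) (q i) -> le (mul s c) (q i) \/ le (mul s d) p) one n)
      as [s [Hs Hsq]]; [exact HS1 | exact HSmul | | | |].
    + intros i s t H c d Hcd.
      destruct (H c d Hcd); [left | right]; rewrite mul_AC; now apply le_mul_of_le.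
    + intros i s t H c d Hcd.
      destruct (H c d Hcd); [left | right]; rewrite (mul_comm s t), mul_AC; now apply le_mul_of_le.
    + intros i Hi. destruct (Hq i Hi) as [[_ [_ [s [Hs Hsq]]]] Hradi].
      exists s. split; [exact Hs |]. now rewrite <- Hradi.
    + exists s. split; [exact Hs |]. intros c d Hcd. rewrite Hrad.
      destruct (classic (le (mul s d) p)) as [Hd | Hd]; [now right | left].
      apply inf_range_glb. intros i Hi.
      destruct (Hsq i Hi c d) as [Hc | Hc]; [| exact Hc | contradiction].
      apply (le_trans _ _ _ Hcd), inf_range_lb, Hi.
Qed.

End MultLatticeFacts.

Theorem mainTheorem8 (L : MultLattice) (hL : c_lattice L)
  (S : L -> Prop) (hS : mult_closed S) (h1 : S one) (h0 : ~ S bot)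
  (p : L) (n : nat) (q : nat -> L) (hn : 1 <= n)
  (hq : forall i, 1 <= i <= n -> S_p_primary S p (q i)) :
  S_p_primary S p (inf (fun y => exists i, 1 <= i <= n /\ y = q i)).
Proof.
  destruct hL as [Hcg _].
  assert (Hrad : rad (inf_range L q n) = p).
  { apply rad_inf_range; [exact Hcg | exact hn |]. intros i Hi. now destruct (hq i Hi) as [_ [Hradi _]]. }
  split; [| split; [exact Hrad |]].
  - apply (S_primary_inf_range L S p); [exact hS | exact h1 | exact hn | exact Hrad |].
    intros i Hi. destruct (hq i Hi) as [Hprim [Hradi _]]. now split.
  - destruct (hq 1) as [_ [_ Hprime]]; [lia | exact Hprime].
Qed.
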